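(* Let $\mathbf z,\mathbf w$ be jointly distributed $M$-dimensional random vectors whose components have finite positive variance, with standardized versions $\mathbf z',\mathbf w'$, and assume $\boldsymbol\Sigma_{\mathbf z'\mathbf z'}$ and $\boldsymbol\Sigma_{\mathbf z'\mathbf w'}$ are full rank. Then $$m_{\mathrm{SVD}}(\mathbf z,\mathbf w)\ \ge\ 1-\sqrt{M\sum_{l=1}^M\mathrm{Var}[z'_l-w'_l]},$$ where the variance is over the joint distribution of $(\mathbf z',\mathbf w')$.
   Context: For $M$-dimensional random vectors $\mathbf z,\mathbf w$ (jointly distributed, components with finite positive variance), let $\mathbf z',\mathbf w'$ be the standardized vectors $z'_i=(z_i-\mathbb E[z_i])/\operatorname{std}(z_i)$, $w'_i=(w_i-\mathbb E[w_i])/\operatorname{std}(w_i)$, and let $\boldsymbol\Sigma_{\mathbf z'\mathbf w'}$ be the cross-covariance matrix with entries $\mathrm{Cov}[z'_i,w'_j]$ (and $\boldsymbol\Sigma_{\mathbf z'\mathbf z'}$ the covariance matrix of $\mathbf z'$). Let $\{\mathbf u_i\}_{i=1}^M$, $\{\mathbf v_i\}_{i=1}^M$ be the left and right singular vectors of $\boldsymbol\Sigma_{\mathbf z'\mathbf w'}$. Define $m_{\mathrm{SVD}}(\mathbf z,\mathbf w)=\frac1M\sum_{i=1}^M\mathrm{Cov}[\mathbf u_i^\top\mathbf z',\mathbf v_i^\top\mathbf w']$ (equivalently, $\frac1M$ times the sum of the singular values of $\boldsymbol\Sigma_{\mathbf z'\mathbf w'}$) and $d_{\mathrm{SVD}}(\mathbf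 z,\mathbf w)=1-m_{\mathrm{SVD}}(\mathbf z,\mathbf w)$. *)

From HB Require Import structures.
From mathcomp Require Import all_boot all_order all_algebra.
From mathcomp Require Import all_classical all_reals all_analysis.
Set Implicit Arguments. Unset Strict Implicit. Unset Printing Implicit Defensive.
Import Order.TTheory GRing.Theory Num.Theory.
Local Open Scope ring_scope.

Section svd_defs.
Context {d : measure_display} {T : measurableType d} {R : realType}.

Definition standardize (P : probability T R) (X : T -> R) : T -> R :=
  fun t => (X t - fine 'E_P[X]) / Num.sqrt (fine 'V_P[X]).

Definition cross_cov (P : probability T R) (M : nat) (z w : 'I_M -> T -> R)
  : 'M[R]_M := \matrix_(i, j) fine (covariance P (z i) (w j)).
End svd_defs.

Definition is_svd {R : realType} (M : nat) (A U V : 'M[R]_M) (s : 'rV[R]_M) :=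
  [/\ U^T *m U = 1%:M, V^T *m V = 1%:M, (forall i, 0 <= s 0 i)
    & A = U *m diag_mx s *m V^T].

Definition m_SVD_of {R : realType} (M : nat) (s : 'rV[R]_M) : R :=
  M%:R^-1 * \sum_(i < M) s 0 i.

From HB Require Import structures.
From mathcomp Require Import all_boot all_order all_algebra.
From mathcomp Require Import all_classical all_reals all_analysis.
From mathcomp Require Import ring lra.
Set Implicit Arguments. Unset Strict Implicit. Unset Printing Implicit Defensive.
Import Order.TTheory GRing.Theory Num.Theory.
Local Open Scope ring_scope.

(* Standardized variables have unit variance, so Cov[z'_l, w'_l] = 1 - Var[z'_l - w'_l] / 2
   and the trace of the cross-covariance matrix is M - S / 2, with S the sum of these
   variances.  For A = U diag(s) V^T with orthogonal U, V, tr A = sum_k s_k (sum_i U_ik V_ik)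
   and each weight is at most 1 since the columns are unit vectors, so tr A <= sum_k s_k.  What
   remains is the scalar inequality M - S / 2 <= t ==> 1 - sqrt(M S) <= t / M, which holds
   because either M S >= 1 (and the left side is <= 0 <= t / M) or M S < 1, in which case
   S <= sqrt(M S). *)

Section standardization.
Context (d : measure_display) (T : measurableType d) (R : realType).
Variable P : probability T R.

Lemma standardizeE (X : T -> R) : standardize P X =
  ((Num.sqrt (fine 'V_P[X]))^-1 \o* (X \- cst (fine 'E_P[X])))%R.
Proof. by apply/funext => t; rewrite /standardize /= mulrC. Qed.

Lemma Lfun2_centered (X : T -> R) : X \in Lfun P 2%:E ->
  (X \- cst (fine 'E_P[X]))%R \in Lfun P 2%:E.
Proof.
move=> X2; apply: rpredB => //; first by rewrite lee1n.
by move=> ?; exact: (Lfun_cst P (fine 'E_P[X]) 2).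
Qed.

Lemma standardize_Lfun2 (X : T -> R) : X \in Lfun P 2%:E ->
  standardize P X \in Lfun P 2%:E.
Proof.
move=> X2; rewrite standardizeE; apply: Lfun_scale; first by rewrite ler1n.
exact: Lfun2_centered.
Qed.

Lemma variance_standardize (X : T -> R) : X \in Lfun P 2%:E -> (0 < 'V_P[X])%E ->
  'V_P[standardize P X] = 1%E.
Proof.
move=> X2 VX_gt0.
rewrite standardizeE (varianceZ _ (Lfun2_centered X2)) (varianceB_cst_r _ X2).
have VX_fin := variance_fin_num X2.
have VX_gt0' : 0 < fine 'V_P[X] by rewrite -lte_fin fineK.
rewrite -(fineK VX_fin) -EFinM; congr (_%:E).
by rewrite exprVn sqr_sqrtr ?ltW // mulVf // gt_eqF.
Qed.

Lemma covariance_standardize (X Y : T -> R) :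
  X \in Lfun P 2%:E -> (0 < 'V_P[X])%E ->
  Y \in Lfun P 2%:E -> (0 < 'V_P[Y])%E ->
  fine (covariance P (standardize P X) (standardize P Y)) =
  1 - fine 'V_P[(standardize P X \- standardize P Y)%R] / 2.
Proof.
move=> X2 VX Y2 VY.
have X'2 := standardize_Lfun2 X2; have Y'2 := standardize_Lfun2 Y2.
have Pfin : P setT \is a fin_num := fin_num_measure P _ measurableT.
have cov_fin : covariance P (standardize P X) (standardize P Y) \is a fin_num.
  exact: covariance_fin_num (Lfun_subset12 Pfin X'2) (Lfun_subset12 Pfin Y'2)
    (Lfun2_mul_Lfun1 X'2 Y'2).
rewrite varianceB // !variance_standardize // -(fineK cov_fin) -EFinM -EFinD /=.
by field.
Qed.

Lemma mxtrace_cross_cov_standardize (M : nat) (z w : 'I_M -> T -> R) :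
  (forall i, z i \in Lfun P 2%:E) -> (forall i, w i \in Lfun P 2%:E) ->
  (forall i, (0 < 'V_P[z i])%E) -> (forall i, (0 < 'V_P[w i])%E) ->
  \tr (cross_cov P (fun i => standardize P (z i)) (fun i => standardize P (w i))) =
  M%:R - (\sum_(l < M) fine 'V_P[(standardize P (z l) \- standardize P (w l))%R]) / 2.
Proof.
move=> z2 w2 zV wV; rewrite /mxtrace.
under eq_bigr do rewrite mxE covariance_standardize //.
by rewrite sumrB sumr_const card_ord -mulr_suml.
Qed.

End standardization.

Section singular_values.
Variables (R : realType) (n : nat).

Lemma orthogonal_col_sqr_sum (U : 'M[R]_n) k : U^T *m U = 1%:M ->
  \sum_i U i k ^+ 2 = 1.
Proof.
move=> UU; transitivity ((U^T *m U) k k); last by rewrite UU mxE eqxx.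
by rewrite mxE; apply: eq_bigr => i _; rewrite !mxE expr2.
Qed.

Lemma orthogonal_col_dot_le1 (U V : 'M[R]_n) k :
  U^T *m U = 1%:M -> V^T *m V = 1%:M -> \sum_i U i k * V i k <= 1.
Proof.
move=> UU VV; apply: (@le_trans _ _ (\sum_i (U i k ^+ 2 + V i k ^+ 2) / 2)).
  apply: ler_sum => i _; have := sqr_ge0 (U i k - V i k); lra.
by rewrite -mulr_suml big_split /= !orthogonal_col_sqr_sum //; lra.
Qed.

Lemma mxtrace_le_sum_singular_values (A U V : 'M[R]_n) (s : 'rV[R]_n) :
  is_svd A U V s -> \tr A <= \sum_k s 0 k.
Proof.
case=> UU VV s_ge0 ->; rewrite /mxtrace.
have diagE i : (U *m diag_mx s *m V^T) i i = \sum_k s 0 k * (U i k * V i k).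
  rewrite mul_mx_diag !mxE; apply: eq_bigr => k _; rewrite !mxE; ring.
under eq_bigr do rewrite diagE.
rewrite exchange_big /=; apply: ler_sum => k _.
rewrite -mulr_sumr -[leRHS]mulr1; apply: ler_wpM2l => //.
exact: orthogonal_col_dot_le1.
Qed.

End singular_values.

Lemma one_sub_sqrt_le_mean (R : realType) (M S t : R) :
  1 <= M -> 0 <= S -> 0 <= t -> M - S / 2 <= t -> 1 - Num.sqrt (M * S) <= M^-1 * t.
Proof.
move=> M_ge1 S_ge0 t_ge0 tr_le; rewrite ler_pdivlMl; last lra.
have S_le_MS : S <= M * S by rewrite ler_peMl.
have [MS_ge1|MS_lt1] := lerP 1 (M * S).
  have : 1 <= Num.sqrt (M * S) by rewrite -(sqrtr1 R) ler_sqrt //; lra.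
  nra.
have S_le_sqrt : S <= Num.sqrt (M * S).
  rewrite -{1}(ger0_norm S_ge0) -sqrtr_sqr ler_sqrt; last lra.
  by rewrite expr2 ler_wpM2r //; lra.
have : M * (1 - Num.sqrt (M * S)) <= M * (1 - S) by rewrite ler_wpM2l //; lra.
lra.
Qed.

Theorem mainTheorem9 (d : measure_display) (T : measurableType d)
  (R : realType) (P : probability T R) (M : nat) (z w : 'I_M -> T -> R) :
  (0 < M)%N ->
  (forall i, z i \in Lfun P 2%:E) -> (forall i, w i \in Lfun P 2%:E) ->
  (forall i, (0 < 'V_P[z i])%E) -> (forall i, (0 < 'V_P[w i])%E) ->
  \rank (cross_cov P (fun i => standardize P (z i))
                     (fun i => standardize P (z i))) = M ->
  \rank (cross_cov P (fun i => standardize P (z i))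
                     (fun i => standardize P (w i))) = M ->
  forall (U V : 'M[R]_M) (s : 'rV[R]_M),
  is_svd (cross_cov P (fun i => standardize P (z i))
                      (fun i => standardize P (w i))) U V s ->
  1 - Num.sqrt (M%:R * \sum_(l < M)
      fine 'V_P[(standardize P (z l) \- standardize P (w l))%R])
    <= m_SVD_of s.
Proof.
move=> M_gt0 z2 w2 zV wV _ _ U V s svd.
apply: one_sub_sqrt_le_mean.
- by rewrite ler1n.
- by apply: sumr_ge0 => l _; apply/fine_ge0/variance_ge0.
- by apply: sumr_ge0 => i _; case: svd.
- rewrite -mxtrace_cross_cov_standardize //.
  exact: mxtrace_le_sum_singular_values svd.
Qed.
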